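(* Let $X$ be a real Banach space and let $A \subset X$ be a compact set not containing the zero vector. Let $I$ be an index set with $m$ elements and $\{x_i : i \in I\} \subset S_X$. Then there exist $y_i \in \mathbb{R}^+ x_i$ and $r_i > 0$ with $\|y_i\| \ge r_i$ for all $i \in I$ such that $\{B(y_i, r_i)\}_{i \in I}$ covers $A$, if and only if for every selection $\phi$ of the subdifferential mapping $\partial\|\cdot\|$, the family $\{\phi(x_i)\}_{i \in I}$ positively separates points of $A$, i.e. $\sup_{i \in I} \phi(x_i)(x) > 0$ for every $x \in A$.
   Context: $\mathbb{R}^+ x_i = \{ t x_i : t > 0\}$; $B(c,r) = \{ z : \|c - z\| < r\}$. The subdifferential of the norm at $x \ne 0$ is $\partial\|x\| = \{ x^* \in S_{X^*} : x^*(x) = \|x\|\}$. A selection of $\partial\|\cdot\|$ is a map $\phi$ assigning to each non-zero $x$ an element $\phi(x) \in \partial\|x\|$. *)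

From HB Require Import structures.
From mathcomp Require Import all_boot all_order all_algebra.
From mathcomp Require Import all_classical all_reals all_analysis.
Set Implicit Arguments. Unset Strict Implicit. Unset Printing Implicit Defensive.
Import Order.TTheory GRing.Theory Num.Theory.
Import numFieldNormedType.Exports.
Local Open Scope classical_set_scope.
Local Open Scope ring_scope.

Definition is_dual_elt (R : realType) (X : normedModType R) (f : X -> R) : Prop :=
  (forall (a : R) (u v : X), f (a *: u + v) = a * f u + f v) /\ continuous f.

Definition dual_norm (R : realType) (X : normedModType R) (f : X -> R) : R :=
  sup [set `|f z| | z in [set z : X | `|z| <= 1]].

Definition in_dual_sphere (R : realType) (X : normedModType R) (f : X -> R) : Prop :=
  is_dual_elt f /\ dual_norm f = 1.

Definition subdiff_norm (R : realType) (X : normedModType R) (x : X) : set (X -> R) :=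
  [set f | in_dual_sphere f /\ f x = `|x|].

Definition subdiff_selection (R : realType) (X : normedModType R) (phi : X -> X -> R) : Prop :=
  forall x : X, x != 0 -> subdiff_norm x (phi x).

Definition oball (R : realType) (X : normedModType R) (c : X) (r : R) : set X :=
  [set z | `|c - z| < r].

(* If a lies in a ball B(t x_i, r) with r <= t, then every norming functional
   f of x_i satisfies f (t x_i - a) < t = f (t x_i), hence f a > 0.
   Conversely, if a lies in no ball B(t x_i, t), then the ray R^+ a stays at
   distance >= 1 from x_i; the Hahn-Banach theorem applied to the sublinear
   functional v |-> dist(v, R^+ a) gives a norming functional of x_i that is
   nonpositive at a, and these functionals assemble into a selection that does
   not separate a.  Finally the balls B(n x_i, n) increase with n, so by
   compactness a single n works for all of A. *)

From HB Require Import structures.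
From mathcomp Require Import all_boot all_order all_algebra.
From mathcomp Require Import all_classical all_reals all_analysis.
From mathcomp Require Import lra.

Set Implicit Arguments.
Unset Strict Implicit.
Unset Printing Implicit Defensive.

Import Order.TTheory GRing.Theory Num.Theory.
Import numFieldNormedType.Exports.
Local Open Scope classical_set_scope.
Local Open Scope ring_scope.

Section HahnBanach.
Variables (R : realType) (V : lmodType R) (p : V -> R).
Hypothesis p_subadd : forall u v, p (u + v) <= p u + p v.
Hypothesis p_homo : forall t u, 0 < t -> t * p u <= p (t *: u).

Lemma sublinear0 : p 0 = 0.
Proof.
apply/eqP; rewrite eq_le; apply/andP; split.
  by have := @p_homo 2 0 (ltr0Sn R 1); rewrite scaler0 => ?; lra.
by have := p_subadd 0 0; rewrite addr0 => ?; lra.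
Qed.

Lemma sublinearZ t u : 0 < t -> p (t *: u) = t * p u.
Proof.
move=> t_gt0; apply/eqP; rewrite eq_le p_homo // andbT.
have := @p_homo t^-1 (t *: u); rewrite invr_gt0 => /(_ t_gt0).
rewrite scalerA mulVf ?gt_eqF // scale1r -(ler_pM2l t_gt0).
by rewrite mulrA mulfV ?gt_eqF ?mul1r.
Qed.

Definition graph_linear (G : set (V * R)) :=
  forall a u r v s, G (u, r) -> G (v, s) -> G (a *: u + v, a * r + s).
Definition graph_functional (G : set (V * R)) :=
  forall v r s, G (v, r) -> G (v, s) -> r = s.
Definition graph_dominated (G : set (V * R)) :=
  forall v r, G (v, r) -> r <= p v.

Lemma graph_linear0 G v r : graph_linear G -> G (v, r) -> G (0, 0).
Proof.
move=> G_lin Gvr; have := G_lin (-1) _ _ _ _ Gvr Gvr.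
by rewrite scaleN1r addNr mulN1r addNr.
Qed.

Section OneStepExtension.
Variables (G : set (V * R)) (w : V).
Hypotheses (G_lin : graph_linear G) (G_fun : graph_functional G).
Hypotheses (G_dom : graph_dominated G) (G00 : G (0, 0)).

Lemma extension_slope_exists :
  exists c, forall d s, G (d, s) -> s - p (d - w) <= c <= p (d + w) - s.
Proof.
have lb_le_ub d1 s1 d2 s2 : G (d1, s1) -> G (d2, s2) ->
    s1 - p (d1 - w) <= p (d2 + w) - s2.
  move=> G1 G2; have := G_dom (G_lin 1 G1 G2); rewrite scale1r mul1r.
  have := p_subadd (d1 - w) (d2 + w); rewrite addrACA addNr addr0; lra.
pose L := [set ds.2 - p (ds.1 - w) | ds in G].
exists (sup L) => d s Gds; apply/andP; split.
  apply: ub_le_sup; last by exists (d, s).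
  by exists (p (d + w) - s) => _ [[d' s'] Gd' <-]; exact: lb_le_ub.
apply: ge_sup; first by exists (s - p (d - w)), (d, s).
by move=> _ [[d' s'] Gd' <-]; exact: lb_le_ub.
Qed.

Variable c : R.
Hypothesis c_bounds :
  forall d s, G (d, s) -> s - p (d - w) <= c <= p (d + w) - s.

Definition graph_extend : set (V * R) :=
  [set vr | exists d s t, G (d, s) /\ vr = (d + t *: w, s + t * c)].

Lemma graph_extend_linear : graph_linear graph_extend.
Proof.
move=> a _ _ _ _ [d1 [s1 [t1 [G1 [-> ->]]]]] [d2 [s2 [t2 [G2 [-> ->]]]]].
exists (a *: d1 + d2), (a * s1 + s2), (a * t1 + t2); split; first exact: G_lin.
congr pair; first by rewrite scalerDr scalerA addrACA -scalerDl.
by rewrite mulrDr mulrA addrACA -mulrDl.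
Qed.

Hypothesis w_notin : ~ exists r, G (w, r).

Lemma graph_extend_functional : graph_functional graph_extend.
Proof.
move=> _ _ _ [d1 [s1 [t1 [G1 [-> ->]]]]] [d2 [s2 [t2 [G2 []]]]] e ->.
have [t12|t12] := eqVneq t1 t2.
  by subst t2; move/addIr: e => e; subst d2; rewrite (G_fun G1 G2).
have G21 := G_lin (-1) G1 G2; rewrite scaleN1r mulN1r in G21.
have := G_lin (t1 - t2)^-1 G21 G00; rewrite !addr0.
have -> : - d1 + d2 = (t1 - t2) *: w.
  by rewrite scalerBl; apply: (addrI d1); rewrite addNKr addrA e addrK.
rewrite scalerA mulVf ?scale1r ?subr_eq0 //.
by move=> Gw; case: w_notin; eexists; exact: Gw.
Qed.

Lemma graph_extend_dominated : graph_dominated graph_extend.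
Proof.
move=> _ _ [d [s [t [Gds [-> ->]]]]].
have [t_lt0|t_gt0|->] := ltgtP t 0.
- have nt_gt0 : 0 < - t by rewrite oppr_gt0.
  have /andP[+ _] := c_bounds (G_lin (- t)^-1 Gds G00); rewrite !addr0.
  rewrite -(ler_pM2l nt_gt0) mulrBr mulrA mulfV ?gt_eqF // mul1r -sublinearZ //.
  by rewrite scalerBr scalerA mulfV ?gt_eqF // scale1r scaleNr opprK mulNr; lra.
- have /andP[_ +] := c_bounds (G_lin t^-1 Gds G00); rewrite !addr0.
  rewrite -(ler_pM2l t_gt0) mulrBr mulrA mulfV ?gt_eqF // mul1r -sublinearZ //.
  by rewrite scalerDr scalerA mulfV ?gt_eqF // scale1r; lra.
- by rewrite scale0r mul0r !addr0; exact: G_dom.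
Qed.

Lemma graph_extend_proper : G `<` graph_extend.
Proof.
split; first by move=> [d s] Gds; exists d, s, 0; rewrite scale0r mul0r !addr0.
move=> extG; apply: w_notin; exists c.
by apply: extG; exists 0, 0, 1; rewrite scale1r mul1r !add0r.
Qed.

End OneStepExtension.

Variable v0 : V.

(* The disjunct [G = set0] admits the union of the empty chain in Zorn's
   lemma. *)
Definition dominated_graph (G : set (V * R)) :=
  [/\ graph_linear G, graph_functional G, graph_dominated G
    & G = set0 \/ G (v0, p v0)].

Lemma dominated_graph_bigcup (F : set (set (V * R))) :
  F `<=` dominated_graph -> total_on F subset ->
  dominated_graph (\bigcup_(G in F) G).
Proof.
move=> Fdom Ftot; split.
- move=> a u r v s [G1 FG1 G1ur] [G2 FG2 G2vs].
  have [G12|G21] := Ftot _ _ FG1 FG2.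
    have [G2_lin _ _ _] := Fdom _ FG2.
    by exists G2 => //; apply: G2_lin (G12 _ G1ur) G2vs.
  have [G1_lin _ _ _] := Fdom _ FG1.
  by exists G1 => //; apply: G1_lin G1ur (G21 _ G2vs).
- move=> v r s [G1 FG1 G1vr] [G2 FG2 G2vs].
  have [G12|G21] := Ftot _ _ FG1 FG2.
    by have [_ G2_fun _ _] := Fdom _ FG2; apply: G2_fun (G12 _ G1vr) G2vs.
  by have [_ G1_fun _ _] := Fdom _ FG1; apply: G1_fun G1vr (G21 _ G2vs).
- by move=> v r [G FG Gvr]; have [_ _ + _] := Fdom _ FG; exact.
have [[G FG Gv0]|noG] := pselect (exists2 G, F G & G (v0, p v0)).
  by right; exists G.
left; apply/seteqP; split => // -[v r] [G FG Gvr].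
have [_ _ _ [G0|]] := Fdom _ FG; first by rewrite G0 in Gvr.
by move=> Gv0; case: noG; exists G.
Qed.

Lemma dominated_graph_line :
  dominated_graph [set (t *: v0, t * p v0) | t in [set: R]].
Proof.
split.
- move=> a _ _ _ _ [t1 _ [<- <-]] [t2 _ [<- <-]]; exists (a * t1 + t2) => //.
  by rewrite scalerDl scalerA mulrDl mulrA.
- move=> _ _ _ [t1 _ [<- <-]] [t2 _ [e <-]].
  have [->|v0_neq0] := eqVneq v0 0; first by rewrite sublinear0 !mulr0.
  have /eqP : (t1 - t2) *: v0 = 0 by rewrite scalerBl e subrr.
  by rewrite scaler_eq0 (negbTE v0_neq0) orbF subr_eq0 => /eqP ->.
- move=> _ _ [t _ [<- <-]].
  have [t_lt0|t_gt0|->] := ltgtP t 0; last by rewrite scale0r mul0r sublinear0.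
    have := p_subadd v0 (- v0); rewrite addrN sublinear0 => pNv0.
    rewrite -[t]opprK scaleNr -scalerN sublinearZ ?oppr_gt0 //; nra.
  by rewrite sublinearZ.
- by right; exists 1; rewrite ?scale1r ?mul1r.
Qed.

Theorem hahn_banach : exists f : V -> R,
  [/\ forall a u v, f (a *: u + v) = a * f u + f v,
      forall v, f v <= p v & f v0 = p v0].
Proof.
have [G [[G_lin G_fun G_dom G0] Gmax]] := Zorn_bigcup dominated_graph_bigcup.
have Gv0 : G (v0, p v0).
  case: G0 => // G0; case: (Gmax _ _ dominated_graph_line); rewrite G0.
  by split=> // /(_ (v0, p v0)); apply; exists 1; rewrite ?scale1r ?mul1r.
have G00 := graph_linear0 G_lin Gv0.
have G_total w : exists r, G (w, r).
  apply: contrapT => w_notin.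
  have [c c_bounds] := extension_slope_exists w G_lin G_dom.
  apply: (Gmax _ (graph_extend_proper G00 c w_notin)); split.
  - exact: graph_extend_linear.
  - exact: graph_extend_functional.
  - exact: graph_extend_dominated.
  - by right; apply: (graph_extend_proper G00 c w_notin).1.
have [f Gf] := choice G_total.
exists f; split.
- by move=> a u v; exact: G_fun (Gf _) (G_lin a _ _ _ _ (Gf u) (Gf v)).
- by move=> v; exact: G_dom (Gf v).
- exact: G_fun (Gf _) Gv0.
Qed.

End HahnBanach.

Section NormingFunctionals.
Variables (R : realType) (X : normedModType R).
Implicit Types (f : X -> R) (a u v z : X).

Section LinearForm.
Variable f : X -> R.
Hypothesis f_lin : forall k u v, f (k *: u + v) = k * f u + f v.

Lemma linear_form0 : f 0 = 0.
Proof. by have := f_lin 1 0 0; rewrite scale1r addr0 mul1r => ?; lra. Qed.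

Lemma linear_formZ k u : f (k *: u) = k * f u.
Proof. by rewrite -[k *: u]addr0 f_lin linear_form0 addr0. Qed.

Lemma linear_formB u v : f (u - v) = f u - f v.
Proof. by rewrite addrC -scaleN1r f_lin mulN1r addrC. Qed.

End LinearForm.

Lemma dual_sphere_le_norm f : in_dual_sphere f -> forall z, f z <= `|z|.
Proof.
move=> [[f_lin _] f_norm1] z.
have f_bounded : has_sup [set `|f z| | z in [set z : X | `|z| <= 1]].
  apply: contrapT => unbounded; move: f_norm1; rewrite /dual_norm sup_out //.
  by move/eqP; rewrite eq_sym oner_eq0.
have [->|z_neq0] := eqVneq z 0; first by rewrite linear_form0 ?normr0.
have z_gt0 : 0 < `|z| by rewrite normr_gt0.
have : `|f (`|z|^-1 *: z)| <= 1.
  rewrite -f_norm1; apply: sup_upper_bound => //; exists (`|z|^-1 *: z) => //=.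
  by rewrite normrZ ger0_norm ?invr_ge0 // mulVf ?gt_eqF.
rewrite linear_formZ // normrM ger0_norm ?invr_ge0 // -(ler_pM2l z_gt0).
rewrite mulrA mulfV ?gt_eqF // mul1r mulr1 => fz_le.
exact: le_trans (ler_norm _) fz_le.
Qed.

Lemma norming_subdiff_norm f z :
  (forall k u v, f (k *: u + v) = k * f u + f v) ->
  (forall v, f v <= `|v|) -> z != 0 -> f z = `|z| -> subdiff_norm z f.
Proof.
move=> f_lin f_le z_neq0 fz.
have f_abs v : `|f v| <= `|v|.
  rewrite ler_norml f_le andbT lerNl -mulN1r -linear_formZ // scaleN1r.
  by rewrite -[leRHS]normrN f_le.
have z_gt0 : 0 < `|z| by rewrite normr_gt0.
split=> //; split; first split=> //.
  move=> v; apply/cvgrPdist_lt => e e_gt0; near=> u.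
  rewrite -linear_formB //; apply: le_lt_trans (f_abs _) _; near: u.
  exact: cvgr_dist_lt.
rewrite /dual_norm; apply/eqP; rewrite eq_le; apply/andP; split.
  apply: ge_sup; first by exists `|f 0|, 0 => //=; rewrite normr0.
  by move=> _ [v /= v_le1 <-]; exact: le_trans (f_abs v) v_le1.
apply: ub_le_sup.
  by exists 1 => _ [v /= v_le1 <-]; exact: le_trans (f_abs v) v_le1.
exists (`|z|^-1 *: z).
  by rewrite /= normrZ ger0_norm ?invr_ge0 // mulVf ?gt_eqF.
by rewrite linear_formZ // fz mulVf ?gt_eqF // normr1.
Unshelve. all: by end_near.
Qed.

Lemma subdiff_norm_gt0_of_oball f z a (t r : R) : subdiff_norm z f ->
  0 < t -> r <= `|t *: z| -> oball (t *: z) r a -> 0 < f a.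
Proof.
move=> [f_sphere fz] t_gt0; rewrite /oball /= normrZ gtr0_norm // => r_le za.
have [[f_lin _] _] := f_sphere.
have := dual_sphere_le_norm f_sphere (t *: z - a).
by rewrite linear_formB // linear_formZ // fz; lra.
Qed.

Definition ray_dist a v : R :=
  inf [set `|v - l *: a| | l in [set l : R | 0 <= l]].

Lemma ray_dist_le a v l : 0 <= l -> ray_dist a v <= `|v - l *: a|.
Proof.
move=> l_ge0; apply: ge_inf; last by exists l.
by exists 0 => _ [l' _ <-].
Qed.

Lemma le_ray_dist a v c :
  (forall l, 0 <= l -> c <= `|v - l *: a|) -> c <= ray_dist a v.
Proof.
move=> c_le; apply: lb_le_inf; first by exists `|v - 0 *: a|, 0 => /=.
by move=> _ [l l_ge0 <-]; exact: c_le.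
Qed.

Lemma ray_dist_le_norm a v : ray_dist a v <= `|v|.
Proof. by have := ray_dist_le a v (lexx 0); rewrite scale0r subr0. Qed.

Lemma ray_dist_self a : ray_dist a a = 0.
Proof.
apply/eqP; rewrite eq_le; apply/andP; split.
  by have := ray_dist_le a a ler01; rewrite scale1r subrr normr0.
by apply: le_ray_dist => l _.
Qed.

Lemma ray_distD a u v : ray_dist a (u + v) <= ray_dist a u + ray_dist a v.
Proof.
suff le_l1_l2 l1 l2 : 0 <= l1 -> 0 <= l2 ->
    ray_dist a (u + v) <= `|u - l1 *: a| + `|v - l2 *: a|.
  have le_l2 l2 :
      0 <= l2 -> ray_dist a (u + v) - `|v - l2 *: a| <= ray_dist a u.
    move=> l2_ge0; apply: le_ray_dist => l1 l1_ge0.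
    by have := le_l1_l2 l1 l2 l1_ge0 l2_ge0; lra.
  rewrite -lerBlDl; apply: le_ray_dist => l2 l2_ge0.
  by have := le_l2 l2 l2_ge0; lra.
move=> l1_ge0 l2_ge0.
apply: le_trans (ray_dist_le a _ (addr_ge0 l1_ge0 l2_ge0)) _.
by rewrite scalerDl opprD addrACA ler_normD.
Qed.

Lemma ray_dist_homo a t v :
  0 < t -> t * ray_dist a v <= ray_dist a (t *: v).
Proof.
move=> t_gt0; apply: le_ray_dist => l l_ge0.
have -> : t *: v - l *: a = t *: (v - (t^-1 * l) *: a).
  by rewrite scalerBr scalerA mulrA mulfV ?gt_eqF // mul1r.
rewrite normrZ gtr0_norm // ler_pM2l //; apply: ray_dist_le.
by rewrite mulr_ge0 // invr_ge0 ltW.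
Qed.

Lemma exists_subdiff_norm_nonpos z a :
  z != 0 -> `|z| <= ray_dist a z -> exists2 g, subdiff_norm z g & g a <= 0.
Proof.
move=> z_neq0 z_far.
have [g [g_lin g_le gz]] := hahn_banach (ray_distD a) (ray_dist_homo a) z.
exists g; last by rewrite -(ray_dist_self a) g_le.
apply: norming_subdiff_norm => // [v|].
  exact: le_trans (g_le v) (ray_dist_le_norm a v).
by rewrite gz; apply/eqP; rewrite eq_le ray_dist_le_norm.
Qed.

Lemma exists_selection_nonpos (S : set X) a :
  (forall z, S z -> exists2 g, subdiff_norm z g & g a <= 0) ->
  exists2 phi, subdiff_selection phi & forall z, S z -> phi z a <= 0.
Proof.
move=> S_nonpos.
have pick z : exists g, (z != 0 -> subdiff_norm z g) /\ (S z -> g a <= 0).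
  have [Sz|nSz] := pselect (S z).
    by have [g ? ?] := S_nonpos z Sz; exists g.
  have [->|z_neq0] := eqVneq z 0; first by exists (fun=> 0).
  (* Off [S] any norming functional will do: the case [a = 0]. *)
  have [|g g_subdiff _] := @exists_subdiff_norm_nonpos z 0 z_neq0.
    by apply: le_ray_dist => l _; rewrite scaler0 subr0.
  by exists g.
have [phi phi_spec] := choice pick.
by exists phi => [z|z Sz]; [exact: (phi_spec z).1 | exact: (phi_spec z).2].
Qed.

End NormingFunctionals.

Lemma compact_nondecreasing_cover (T : ptopologicalType) (A : set T)
    (U : nat -> set T) :
  compact A -> (forall n, open (U n)) ->
  (forall n m, (n <= m)%N -> U n `<=` U m) ->
  A `<=` \bigcup_n U n -> exists N, A `<=` U N.
Proof.
rewrite compact_cover => A_compact U_open U_mono A_cover.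
have [D _ A_coverD] :=
  A_compact nat [set: nat] U (fun n _ => U_open n) A_cover.
exists (\max_(n <- finmap.enum_fset D) n) => a /A_coverD [n Dn Una].
by apply: U_mono Una; apply: leq_bigmax_seq.
Qed.

Section RayBalls.
Variables (R : realType) (X : normedModType R).

Lemma oballE (c : X) (r : R) : oball c r = ball c r.
Proof. by rewrite -ball_normE. Qed.

Lemma oball_ray_mono (x a : X) (t s : R) :
  `|x| = 1 -> t <= s -> oball (t *: x) t a -> oball (s *: x) s a.
Proof.
rewrite /oball /= => x1 ts ta.
have -> : s *: x - a = (s - t) *: x + (t *: x - a).
  by rewrite addrA -scalerDl subrK.
apply: le_lt_trans (ler_normD _ _) _.
by rewrite normrZ x1 mulr1 ger0_norm ?subr_ge0 //; lra.
Qed.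

Lemma norm_le_ray_dist (x a : X) : `|x| = 1 ->
  (forall t, 0 < t -> ~ oball (t *: x) t a) -> `|x| <= ray_dist a x.
Proof.
move=> x1 no_ball; apply: le_ray_dist => l; rewrite le0r => /predU1P[->|l_gt0].
  by rewrite scale0r subr0.
have := no_ball l^-1; rewrite invr_gt0 /oball /= => /(_ l_gt0) /negP.
rewrite -leNgt x1 -(ler_pM2l l_gt0) mulfV ?gt_eqF // => le_l.
apply: le_trans le_l _; rewrite -[l in l * _]gtr0_norm // -normrZ.
by rewrite scalerBr scalerA mulfV ?gt_eqF // scale1r.
Qed.

Lemma exists_ray_oball (I : Type) (x : I -> X) (a : X) :
  (forall i, `|x i| = 1) ->
  (forall phi, subdiff_selection phi -> exists i, 0 < phi (x i) a) ->
  exists i t, 0 < t /\ oball (t *: x i) t a.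
Proof.
move=> x1 separated; apply: contrapT => no_ball.
have [|phi phi_sel phi_le] := exists_selection_nonpos (S := range x) (a := a).
  move=> _ [i _ <-]; apply: exists_subdiff_norm_nonpos.
    by rewrite -normr_eq0 x1 oner_eq0.
  by apply: norm_le_ray_dist => // t t_gt0 ta; apply: no_ball; exists i, t.
have [i phi_gt0] := separated phi phi_sel.
by have := phi_le _ (imageT x i); lra.
Qed.

End RayBalls.

Theorem mainTheorem8 (R : realType) (X : completeNormedModType R)
    (A : set X) (m : nat) (I : finType) (x : I -> X) :
  compact A -> ~ A 0 -> #|I|%N = m ->
  (forall i, `|x i| = 1) ->
  ((exists (y : I -> X) (r : I -> R),
      (forall i, exists t : R, 0 < t /\ y i = t *: x i) /\
      (forall i, 0 < r i /\ r i <= `|y i|) /\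
      A `<=` \bigcup_(i in [set: I]) oball (y i) (r i))
   <->
   (forall phi : X -> X -> R, subdiff_selection phi ->
      forall a, A a -> exists i : I, 0 < phi (x i) a)).
Proof.
move=> A_compact _ _ x1.
split=> [[y [r [y_ray [r_le A_cover]]]] phi phi_sel a Aa | separated].
  have [i _ a_in] := A_cover a Aa; have [t [t_gt0 yi]] := y_ray i.
  have x_neq0 : x i != 0 by rewrite -normr_eq0 x1 oner_eq0.
  exists i; apply: subdiff_norm_gt0_of_oball (phi_sel _ x_neq0) t_gt0 _ _.
    by rewrite -yi; exact: (r_le i).2.
  by rewrite -yi.
pose U n := \bigcup_(i in [set: I]) oball (n.+1%:R *: x i) n.+1%:R.
have [N A_UN] : exists N, A `<=` U N.
  apply: compact_nondecreasing_cover => // [n|n k nk a [i _ a_in]|a Aa].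
  - by apply: bigcup_open => i _; rewrite oballE; exact: ball_open.
  - by exists i => //; apply: oball_ray_mono a_in; rewrite ?ler_nat.
  have [i [t [t_gt0 a_in]]] :=
    exists_ray_oball x1 (fun phi phi_sel => separated phi phi_sel a Aa).
  exists (Num.Def.archi_bound t) => //; exists i => //.
  apply: oball_ray_mono (x1 i) _ a_in.
  by rewrite ltW // (lt_le_trans (archi_boundP (ltW t_gt0))) // ler_nat.
exists (fun i => N.+1%:R *: x i), (fun=> N.+1%:R).
split; first by exists N.+1%:R.
by split=> // i; rewrite normrZ x1 mulr1 ger0_norm.
Qed.
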